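(* Let $k\ge3$ and let $\mathcal B_k$ denote $\mathcal E_1$ if $k=3$ and $\mathcal E_{k-2}$ if $k\ge4$ (so $\mathcal B_k$ carries exactly the nonlocal coordinates $\psi^{(3)},\dots,\psi^{(k-1)}$). Then the horizontal $1$-form $\omega^{(k)}=X^{(k)}\,dx+Y^{(k)}\,dy$ is a nontrivial conservation law of $\mathcal B_k$: it satisfies $\mathcal D_y(X^{(k)})=\mathcal D_x(Y^{(k)})$, where $\mathcal D_x,\mathcal D_y$ are the total derivatives of $\mathcal B_k$, and there is no smooth function $g$ on $\mathcal B_k$ with $X^{(k)}=\mathcal D_x(g)$ and $Y^{(k)}=\mathcal D_y(g)$.
   Context: Let $\mathcal E_1$ be the system $u_y+vu_x=\frac1{v-u}$, $v_y+uv_x=\frac1{u-v}$ with internal coordinates $x,y,u_i=\partial^iu/\partial x^i$, $v_i=\partial^iv/\partial x^i$ ($i\ge0$) and total derivatives $D_x=\partial_x+\sum_i(u_{i+1}\partial_{u_i}+v_{i+1}\partial_{v_i})$, $D_y=\partial_y+\sum_i\big(D_x^i(\tfrac1{v-u}-vu_1)\partial_{u_i}+D_x^i(\tfrac1{u-v}-uv_1)\partial_{v_i}\big)$. Let $\sigma_m=\sum_{i+j=m}u^iv^j$, $\psi^{(1)}=y$, $\psi^{(2)}=x$, and let $\psi^{(k)}$, $k\ge3$, be new coordinates; for $k\ge2$ put $X^{(k)}=\sigma_{k-2}-\sum_{i=1}^{k-3}i\,\sigma_{k-i-3}\psi^{(i)}$ and for $k\ge3$ put $Y^{(k)}=-uv\,X^{(k-1)}-(k-2)\psi^{(k-2)}$.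 For $m\ge2$, $\mathcal E_m=\mathcal E_1\times\mathbb R^{m-1}$ has the additional coordinates $\psi^{(3)},\dots,\psi^{(m+1)}$ and the total derivatives $D^{(m)}_x=D_x+\sum_{i=3}^{m+1}X^{(i)}\partial/\partial\psi^{(i)}$, $D^{(m)}_y=D_y+\sum_{i=3}^{m+1}Y^{(i)}\partial/\partial\psi^{(i)}$. *)

From Stdlib Require Import Reals List Arith.
From Coquelicot Require Import Coquelicot.
Open Scope R_scope.

(** Internal coordinates of E_m (all m at once):
    x, y, u_i, v_i (i >= 0), and the nonlocal psi^(j) (only j >= 3 used). *)
Inductive coord : Type :=
| Cx | Cy | Cu (i : nat) | Cv (i : nat) | Cpsi (j : nat).

Definition coord_eq_dec (a b : coord) : {a = b} + {a <> b}.
Proof. decide equality; apply Nat.eq_dec. Defined.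

Definition point := coord -> R.

(** Domain of the system: u <> v (the equation involves 1/(v-u)). *)
Definition Dom (p : point) : Prop := p (Cu 0) <> p (Cv 0).

Definition upd (p : point) (c : coord) (t : R) : point :=
  fun c' => if coord_eq_dec c' c then t else p c'.

Definition partial (c : coord) (f : point -> R) : point -> R :=
  fun p => Derive (fun t => f (upd p c t)) (p c).

Definition iterpartial (cs : list coord) (f : point -> R) : point -> R :=
  fold_right partial f cs.

(** Continuity at p (sup-distance on coordinates; for functions depending on
    finitely many coordinates this is ordinary continuity). *)
Definition cont_at (f : point -> R) (p : point) : Prop :=
  forall eps : R, 0 < eps -> exists delta : R, 0 < delta /\
    forall q : point, (forall c, Rabs (q c - p c) < delta) ->
      Rabs (f q - f p) < eps.

Definition smooth_on (f : point -> R) : Prop :=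
  forall (cs : list coord) (p : point), Dom p ->
    (forall c, ex_derive (fun t => iterpartial cs f (upd p c t)) (p c)) /\
    cont_at (iterpartial cs f) p.

Definition rsum (l : list nat) (F : nat -> R) : R :=
  fold_right Rplus 0 (map F l).

Definition psi (j : nat) (p : point) : R :=
  if Nat.eqb j 1 then p Cy else if Nat.eqb j 2 then p Cx else p (Cpsi j).

Definition uu (p : point) := p (Cu 0).
Definition vv (p : point) := p (Cv 0).

Definition sigma (m : nat) (p : point) : R :=
  rsum (seq 0 (S m)) (fun i => uu p ^ i * vv p ^ (m - i)).

Definition Xk (k : nat) (p : point) : R :=
  sigma (k - 2) p -
  rsum (seq 1 (k - 3)) (fun i => INR i * sigma (k - i - 3) p * psi i p).

Definition Yk (k : nat) (p : point) : R :=
  - (uu p * vv p * Xk (k - 1) p) - INR (k - 2) * psi (k - 2) p.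

(** Total derivative D_x of E_1, truncated to u_j, v_j with j < M
    (used to build the coefficients of D_y). *)
Definition Dx0 (M : nat) (f : point -> R) : point -> R :=
  fun p => partial Cx f p +
    rsum (seq 0 M) (fun j => p (Cu (S j)) * partial (Cu j) f p
                           + p (Cv (S j)) * partial (Cv j) f p).

(** Right-hand sides of the evolution: u_y = 1/(v-u) - v u_1, v_y = 1/(u-v) - u v_1. *)
Definition Fu (p : point) : R := / (vv p - uu p) - vv p * p (Cu 1).
Definition Fv (p : point) : R := / (uu p - vv p) - uu p * p (Cv 1).

(** Coefficients D_x^i(F_u), D_x^i(F_v) (D_x^i F depends on u_j,v_j, j <= i+1,
    so truncation i+1 is exact). *)
Definition cu (i : nat) : point -> R := Nat.iter i (Dx0 (S i)) Fu.
Definition cv (i : nat) : point -> R := Nat.iter i (Dx0 (S i)) Fv.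

(** Total derivatives of B_k (nonlocal coordinates psi^(3..k-1)), applied to a
    function depending only on u_j, v_j with j <= N (truncation N). *)
Definition DxB (k N : nat) (f : point -> R) : point -> R :=
  fun p => partial Cx f p +
    rsum (seq 0 (S N)) (fun j => p (Cu (S j)) * partial (Cu j) f p
                               + p (Cv (S j)) * partial (Cv j) f p) +
    rsum (seq 3 (k - 3)) (fun i => Xk i p * partial (Cpsi i) f p).

Definition DyB (k N : nat) (f : point -> R) : point -> R :=
  fun p => partial Cy f p +
    rsum (seq 0 (S N)) (fun j => cu j p * partial (Cu j) f p
                               + cv j p * partial (Cv j) f p) +
    rsum (seq 3 (k - 3)) (fun i => Yk i p * partial (Cpsi i) f p).

Definition relevant (k N : nat) (c : coord) : Prop :=
  match c with
  | Cx | Cy => True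
  | Cu j | Cv j => (j <= N)%nat
  | Cpsi j => (3 <= j)%nat /\ (j <= k - 1)%nat
  end.

Definition depends_on (k N : nat) (g : point -> R) : Prop :=
  forall p q : point, (forall c, relevant k N c -> p c = q c) -> g p = g q.

From Stdlib Require Import Reals List Arith Lia Lra Wf_nat FunctionalExtensionality.
From Coquelicot Require Import Coquelicot.
Open Scope R_scope.

(* Write s = u + v and P = u v.  Extended by X^(0) = X^(1) = 0, the X^(j) satisfy
   X^(j+3) = s X^(j+2) - P X^(j+1) - j psi^(j), and Y^(j) = - P X^(j-1) - (j-2) psi^(j-2).
   Since D_x psi^(j) = X^(j), D_y psi^(j) = Y^(j) and, on solutions, D_y s = - D_x P, the
   identity D_y X^(j) = D_x Y^(j) follows by induction on j.

   If X^(k) = D_x g for a smooth g of finite order N, then D_x g is affine in u_(M+1) and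
   v_(M+1) with slopes dg/du_M and dg/dv_M, while X^(k) involves neither; downward induction
   on M shows that g depends on no u_j, v_j with j >= 1 and that dg/du = 0.  At the points
   where u > 0 and all other coordinates vanish, X^(k) = D_x g then reads
   u^(k-2) = c_0 + sum_(3 <= i < k) c_i u^(i-2), which is impossible. *)

Lemma upd_same p c t : upd p c t c = t.
Proof. unfold upd; destruct (coord_eq_dec c c); congruence. Qed.

Lemma upd_other p c t c' : c' <> c -> upd p c t c' = p c'.
Proof. intro H; unfold upd; destruct (coord_eq_dec c' c); congruence. Qed.

Lemma upd_upd p c t s : upd (upd p c t) c s = upd p c s.
Proof.
  apply functional_extensionality; intro d; unfold upd.
  destruct (coord_eq_dec d c); reflexivity.
Qed.

Lemma upd_comm p c c' t s : c <> c' -> upd (upd p c t) c' s = upd (upd p c' s) c t.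
Proof.
  intro H; apply functional_extensionality; intro d; unfold upd.
  destruct (coord_eq_dec d c'), (coord_eq_dec d c); congruence.
Qed.

Lemma upd_id p c : upd p c (p c) = p.
Proof.
  apply functional_extensionality; intro d; unfold upd.
  destruct (coord_eq_dec d c); congruence.
Qed.

Lemma upd_shift p c c' : upd p c (p c + 1) c' = p c' + if coord_eq_dec c' c then 1 else 0.
Proof. unfold upd; destruct (coord_eq_dec c' c); subst; ring. Qed.

Lemma Dom_upd c q t : c <> Cu 0 -> c <> Cv 0 -> Dom q -> Dom (upd q c t).
Proof. intros Hu Hv Hq; unfold Dom; rewrite !upd_other by auto; exact Hq. Qed.

Lemma Dom_upd_punctured c p :
  Dom p -> exists a, p c <> a /\ forall s, s <> a -> Dom (upd p c s).
Proof.
  intro Hp; unfold Dom in *.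
  destruct (coord_eq_dec c (Cu 0)) as [->|Hu]; [|destruct (coord_eq_dec c (Cv 0)) as [->|Hv]].
  - exists (p (Cv 0)); split; [exact Hp|].
    intros s Hs; rewrite upd_same, upd_other by discriminate; exact Hs.
  - exists (p (Cu 0)); split; [congruence|].
    intros s Hs; rewrite upd_same, upd_other by discriminate; congruence.
  - exists (p c + 1); split; [lra|].
    intros s _; rewrite !upd_other by auto; exact Hp.
Qed.

Lemma rsum_cons a l f : rsum (a :: l) f = f a + rsum l f.
Proof. reflexivity. Qed.

Lemma rsum_app l1 l2 f : rsum (l1 ++ l2) f = rsum l1 f + rsum l2 f.
Proof.
  induction l1 as [|a l1 IH]; [symmetry; apply Rplus_0_l|].
  simpl app; rewrite !rsum_cons, IH; ring.
Qed.

Lemma rsum_ext l f g : (forall x, In x l -> f x = g x) -> rsum l f = rsum l g.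
Proof.
  induction l as [|a l IH]; intro H; [reflexivity|].
  rewrite !rsum_cons, H, IH; [reflexivity | intros; apply H | ]; simpl; auto.
Qed.

Lemma rsum_plus l f g : rsum l (fun i => f i + g i) = rsum l f + rsum l g.
Proof. induction l as [|a l IH]; [cbn; ring|]. rewrite !rsum_cons, IH; ring. Qed.

Lemma rsum_scal l c f : rsum l (fun i => c * f i) = c * rsum l f.
Proof. induction l as [|a l IH]; [cbn; ring|]. rewrite !rsum_cons, IH; ring. Qed.

Lemma rsum_zero l f : (forall x, In x l -> f x = 0) -> rsum l f = 0.
Proof.
  induction l as [|a l IH]; intro H; [reflexivity|].
  rewrite rsum_cons, H, IH; [ring | intros; apply H | ]; simpl; auto.
Qed.

Lemma rsum_map l (h : nat -> nat) f : rsum (map h l) f = rsum l (fun i => f (h i)).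
Proof.
  induction l as [|a l IH]; [reflexivity|].
  simpl map; rewrite !rsum_cons, IH; reflexivity.
Qed.

Lemma rsum_single n s j f :
  (s <= j < s + n)%nat -> (forall i, i <> j -> f i = 0) -> rsum (seq s n) f = f j.
Proof.
  revert s; induction n as [|n IH]; intros s Hj Hf; [lia|].
  simpl seq; rewrite rsum_cons.
  destruct (Nat.eq_dec s j) as [<-|Hs].
  - rewrite rsum_zero; [ring|]. intros x Hx; apply in_seq in Hx; apply Hf; lia.
  - rewrite Hf, IH by (auto; lia); ring.
Qed.

Lemma rsum_abs_le l f g :
  (forall x, In x l -> Rabs (f x) <= g x) -> Rabs (rsum l f) <= rsum l g.
Proof.
  induction l as [|a l IH]; intro H; cbn.
  - rewrite Rabs_R0; lra.
  - eapply Rle_trans; [apply Rabs_triang|].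
    apply Rplus_le_compat; [apply H; left; auto | apply IH; intros; apply H; right; auto].
Qed.

(** * Partial derivatives *)

Definition partially_derivable (f : point -> R) : Prop :=
  forall p c, ex_derive (fun t => f (upd p c t)) (p c).

Lemma partially_derivable_const a : partially_derivable (fun _ => a).
Proof. intros p c; apply ex_derive_const. Qed.

Lemma partially_derivable_coord c0 : partially_derivable (fun q => q c0).
Proof.
  intros p c; destruct (coord_eq_dec c0 c) as [<-|Hc].
  - eapply ex_derive_ext; [|apply ex_derive_id]. intro; simpl; rewrite upd_same; auto.
  - eapply ex_derive_ext; [|apply (ex_derive_const (p c0))].
    intro; simpl; rewrite upd_other; auto.
Qed.

Lemma partially_derivable_plus f g :
  partially_derivable f -> partially_derivable g -> partially_derivable (fun q => f q + g q).
Proof. intros Hf Hg p c; apply (ex_derive_plus (fun t => f (upd p c t))); auto. Qed.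

Lemma partially_derivable_minus f g :
  partially_derivable f -> partially_derivable g -> partially_derivable (fun q => f q - g q).
Proof. intros Hf Hg p c; apply (ex_derive_minus (fun t => f (upd p c t))); auto. Qed.

Lemma partially_derivable_opp f : partially_derivable f -> partially_derivable (fun q => - f q).
Proof. intros Hf p c; apply (ex_derive_opp (fun t => f (upd p c t))); auto. Qed.

Lemma partially_derivable_mult f g :
  partially_derivable f -> partially_derivable g -> partially_derivable (fun q => f q * g q).
Proof. intros Hf Hg p c; apply (ex_derive_mult (fun t => f (upd p c t))); auto. Qed.

Lemma partial_const a c p : partial c (fun _ => a) p = 0.
Proof. unfold partial; apply Derive_const. Qed.

Lemma partial_coord c0 c p : partial c (fun q => q c0) p = if coord_eq_dec c c0 then 1 else 0.
Proof.
  unfold partial; destruct (coord_eq_dec c c0) as [<-|Hc].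
  - rewrite (Derive_ext _ id) by (intro; apply upd_same). apply Derive_id.
  - rewrite (Derive_ext _ (fun _ => p c0)) by (intro; apply upd_other; auto).
    apply Derive_const.
Qed.

Lemma partial_plus f g c p : partially_derivable f -> partially_derivable g ->
  partial c (fun q => f q + g q) p = partial c f p + partial c g p.
Proof. intros; unfold partial; apply (Derive_plus (fun t => f (upd p c t))); auto. Qed.

Lemma partial_minus f g c p : partially_derivable f -> partially_derivable g ->
  partial c (fun q => f q - g q) p = partial c f p - partial c g p.
Proof. intros; unfold partial; apply (Derive_minus (fun t => f (upd p c t))); auto. Qed.

Lemma partial_opp f c p : partial c (fun q => - f q) p = - partial c f p.
Proof. unfold partial; apply (Derive_opp (fun t => f (upd p c t))). Qed.

Lemma partial_mult f g c p : partially_derivable f -> partially_derivable g ->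
  partial c (fun q => f q * g q) p = partial c f p * g p + f p * partial c g p.
Proof.
  intros; unfold partial; rewrite (Derive_mult (fun t => f (upd p c t))), upd_id; auto.
Qed.

Lemma partial_eq0_of_invariant f c p :
  (forall t, f (upd p c t) = f p) -> partial c f p = 0.
Proof.
  intro H; unfold partial; rewrite (Derive_ext _ (fun _ => f p)) by auto.
  apply Derive_const.
Qed.

Lemma Derive_ext_punctured (f1 f2 : R -> R) x a :
  x <> a -> (forall s, s <> a -> f1 s = f2 s) -> Derive f1 x = Derive f2 x.
Proof.
  intros Hx H; apply Derive_ext_loc.
  assert (Hd : 0 < Rabs (x - a)) by (apply Rabs_pos_lt; lra).
  exists (mkposreal _ Hd); intros y Hy; apply H; intros ->.
  change (Rabs (a - x) < Rabs (x - a)) in Hy; rewrite Rabs_minus_sym in Hy; lra.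
Qed.

Lemma eq_of_Derive_eq0 (h : R -> R) a b :
  (forall s, Rmin a b <= s <= Rmax a b -> ex_derive h s /\ Derive h s = 0) -> h a = h b.
Proof.
  intro H; destruct (MVT_gen h a b (fun _ => 0)) as [c [_ Hc]]; [| |lra].
  - intros x Hx; destruct (H x) as [Hex Hd0]; [lra|].
    rewrite <- Hd0; apply Derive_correct; auto.
  - intros x Hx; apply continuity_pt_filterlim.
    apply (ex_derive_continuous (K := R_AbsRing) (V := R_NormedModule)), H; auto.
Qed.

(** * The polynomials X^(k) *)

Lemma sigma_0 p : sigma 0 p = 1.
Proof. unfold sigma, rsum; simpl; ring. Qed.

Lemma sigma_1 p : sigma 1 p = uu p + vv p.
Proof. unfold sigma, rsum; simpl; ring. Qed.

Lemma sigma_S m p : sigma (S m) p = vv p ^ S m + uu p * sigma m p.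
Proof.
  unfold sigma; change (seq 0 (S (S m))) with (0%nat :: seq 1 (S m)).
  rewrite rsum_cons, <- seq_shift, rsum_map, <- rsum_scal, Nat.sub_0_r.
  f_equal; [ring|]. apply rsum_ext; intros i _; simpl; ring.
Qed.

Lemma sigma_rec m p :
  sigma (S (S m)) p = (uu p + vv p) * sigma (S m) p - uu p * vv p * sigma m p.
Proof. rewrite (sigma_S (S m)), (sigma_S m); simpl; ring. Qed.

Definition sigma_conv (c : nat -> R) (n : nat) (p : point) : R :=
  rsum (seq 1 n) (fun i => c i * sigma (n - i) p).

Lemma sigma_conv_rec c n p : sigma_conv c (S (S n)) p =
  (uu p + vv p) * sigma_conv c (S n) p - uu p * vv p * sigma_conv c n p + c (S (S n)).
Proof.
  unfold sigma_conv; rewrite !seq_S, !rsum_app, !rsum_cons.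
  replace (S (S n) - (1 + n))%nat with 1%nat by lia.
  replace (S n - (1 + n))%nat with 0%nat by lia.
  replace (S (S n) - (1 + S n))%nat with 0%nat by lia.
  replace (1 + S n)%nat with (S (S n)) by lia.
  rewrite (rsum_ext _ (fun i => c i * sigma (S (S n) - i) p)
    (fun i => (uu p + vv p) * (c i * sigma (S n - i) p)
              + - (uu p * vv p) * (c i * sigma (n - i) p))).
  - rewrite rsum_plus, !rsum_scal, sigma_0, sigma_1; cbn [rsum map fold_right]; ring.
  - intros i Hi; apply in_seq in Hi.
    replace (S (S n) - i)%nat with (S (S (n - i))) by lia.
    replace (S n - i)%nat with (S (n - i)) by lia.
    rewrite sigma_rec; ring.
Qed.

Lemma Xk_2 p : Xk 2 p = 1.
Proof. unfold Xk; simpl; rewrite sigma_0; cbn; ring. Qed.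

Lemma Xk_sigma_conv n p :
  Xk (S (S (S n))) p = sigma (S n) p - sigma_conv (fun i => INR i * psi i p) n p.
Proof.
  unfold Xk, sigma_conv.
  replace (S (S (S n)) - 2)%nat with (S n) by lia.
  replace (S (S (S n)) - 3)%nat with n by lia.
  f_equal; apply rsum_ext; intros i _.
  replace (S (S (S n)) - i - 3)%nat with (n - i)%nat by lia; ring.
Qed.

(* [Xk 0] and [Xk 1] are junk values (truncated subtraction makes them 1);
   setting them to 0 makes the three-term recursion start at j = 0. *)
Definition Xext (j : nat) (p : point) : R := if (j <=? 1)%nat then 0 else Xk j p.

Definition Yext (j : nat) (p : point) : R :=
  - (uu p * vv p * Xext (j - 1) p) - INR (j - 2) * psi (j - 2) p.

Lemma Xext_0 p : Xext 0 p = 0.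
Proof. reflexivity. Qed.

Lemma Xext_1 p : Xext 1 p = 0.
Proof. reflexivity. Qed.

Lemma Xext_2 p : Xext 2 p = 1.
Proof. apply Xk_2. Qed.

Lemma Xext_eq j p : (2 <= j)%nat -> Xext j p = Xk j p.
Proof. intro H; unfold Xext; destruct (Nat.leb_spec j 1); [lia|reflexivity]. Qed.

Lemma Yext_eq j p : (3 <= j)%nat -> Yext j p = Yk j p.
Proof. intro H; unfold Yext, Yk; rewrite Xext_eq by lia; reflexivity. Qed.

Lemma Xext_rec j p : Xext (S (S (S j))) p =
  (uu p + vv p) * Xext (S (S j)) p - uu p * vv p * Xext (S j) p - INR j * psi j p.
Proof.
  rewrite Xext_eq by lia.
  destruct j as [|[|j]].
  - rewrite Xext_2, Xext_1, Xk_sigma_conv, sigma_1, INR_0.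
    change (sigma_conv (fun i => INR i * psi i p) 0 p) with 0; ring.
  - rewrite Xext_eq, Xext_2, !Xk_sigma_conv, sigma_rec, sigma_1, sigma_0, INR_1 by lia.
    change (sigma_conv (fun i => INR i * psi i p) 0 p) with 0.
    unfold sigma_conv; simpl seq.
    rewrite rsum_cons, Nat.sub_diag, sigma_0, INR_1; change (rsum nil _) with 0; ring.
  - rewrite !Xext_eq, !Xk_sigma_conv, sigma_rec, sigma_conv_rec by lia.
    (* abstract the [sigma] atoms: [ring] would try to unfold them to compare them *)
    generalize (sigma (S (S j)) p) (sigma (S j) p)
      (sigma_conv (fun i => INR i * psi i p) (S j) p) (sigma_conv (fun i => INR i * psi i p) j p).
    intros; ring.
Qed.

Lemma partially_derivable_psi j : partially_derivable (psi j).
Proof.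
  unfold psi; destruct (Nat.eqb j 1), (Nat.eqb j 2); apply partially_derivable_coord.
Qed.

Lemma partially_derivable_Xext j : partially_derivable (Xext j).
Proof.
  induction j as [j IH] using lt_wf_ind.
  destruct j as [|[|[|j]]].
  - change (Xext 0) with (fun _ : point => 0); apply partially_derivable_const.
  - change (Xext 1) with (fun _ : point => 0); apply partially_derivable_const.
  - replace (Xext 2) with (fun _ : point => 1)
      by (apply functional_extensionality; intro; symmetry; apply Xext_2).
    apply partially_derivable_const.
  - replace (Xext (S (S (S j)))) with (fun p => (uu p + vv p) * Xext (S (S j)) p
        - uu p * vv p * Xext (S j) p - INR j * psi j p)
      by (apply functional_extensionality; intro; symmetry; apply Xext_rec).
    unfold uu, vv.
    apply partially_derivable_minus; [apply partially_derivable_minus|].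
    + apply partially_derivable_mult; [|apply IH; lia].
      apply partially_derivable_plus; apply partially_derivable_coord.
    + apply partially_derivable_mult; [|apply IH; lia].
      apply partially_derivable_mult; apply partially_derivable_coord.
    + apply partially_derivable_mult;
        [apply partially_derivable_const | apply partially_derivable_psi].
Qed.

(* Keeps [rewrite] and [ring] from unfolding [Xext] down to the real-number primitives. *)
Opaque Xext.

Ltac partially_derivable_tac :=
  repeat lazymatch goal with
  | |- partially_derivable (Xext _) => apply partially_derivable_Xext
  | |- partially_derivable (psi _) => apply partially_derivable_psi
  | |- partially_derivable uu => apply (partially_derivable_coord (Cu 0))
  | |- partially_derivable vv => apply (partially_derivable_coord (Cv 0))
  | |- partially_derivable (fun _ => ?a) => apply (partially_derivable_const a)
  | |- partially_derivable (fun q => @?f q + @?g q) => apply (partially_derivable_plus f g)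
  | |- partially_derivable (fun q => @?f q - @?g q) => apply (partially_derivable_minus f g)
  | |- partially_derivable (fun q => @?f q * @?g q) => apply (partially_derivable_mult f g)
  | |- partially_derivable (fun q => - @?f q) => apply (partially_derivable_opp f)
  | |- partially_derivable (fun q => uu q) => apply (partially_derivable_coord (Cu 0))
  | |- partially_derivable (fun q => vv q) => apply (partially_derivable_coord (Cv 0))
  | |- partially_derivable (fun q => q _) => apply partially_derivable_coord
  | |- partially_derivable (fun q => Xext _ q) => apply partially_derivable_Xext
  | |- partially_derivable (fun q => psi _ q) => apply partially_derivable_psi
  end.

(** * Total derivatives on order-zero functions *)

Definition base (q : point) : point :=
  fun c => match c with Cu (S _) | Cv (S _) => 0 | _ => q c end.

Definition order_zero (f : point -> R) : Prop := forall q, f (base q) = f q.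

Lemma Xk_order_zero i : order_zero (Xk i).
Proof. intro q; reflexivity. Qed.

Lemma Yk_order_zero i : order_zero (Yk i).
Proof. intro q; reflexivity. Qed.

Lemma order_zero_upd_jet f j q t : order_zero f ->
  f (upd q (Cu (S j)) t) = f q /\ f (upd q (Cv (S j)) t) = f q.
Proof.
  intro Hf.
  assert (Hbase : forall c, c = Cu (S j) \/ c = Cv (S j) -> base (upd q c t) = base q).
  { intros c Hc; apply functional_extensionality; intros [| |[|i]|[|i]|i];
      simpl; try reflexivity; apply upd_other; destruct Hc as [->| ->]; discriminate. }
  split; rewrite <- Hf, Hbase, Hf; auto.
Qed.

Lemma partial_jet_order_zero f j p : order_zero f ->
  partial (Cu (S j)) f p = 0 /\ partial (Cv (S j)) f p = 0.
Proof.
  intro Hf; split; apply partial_eq0_of_invariant; intro t;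
    apply (order_zero_upd_jet f j p t Hf).
Qed.

(* On functions of x, y, u, v and the psi^(i) only, D_x and D_y of B_K both have this form. *)
Definition Dorder0 (a0 : coord) (cu cv : point -> R) (h : nat -> point -> R) (K : nat)
  (f : point -> R) (p : point) : R :=
  partial a0 f p + cu p * partial (Cu 0) f p + cv p * partial (Cv 0) f p
  + rsum (seq 3 (K - 3)) (fun i => h i p * partial (Cpsi i) f p).

Lemma DxB_order_zero k N f p : order_zero f ->
  DxB k N f p = Dorder0 Cx (fun q => q (Cu 1)) (fun q => q (Cv 1)) Xk k f p.
Proof.
  intro Hf; unfold DxB, Dorder0; simpl seq; rewrite rsum_cons.
  rewrite (rsum_zero (seq 1 N)); [ring|].
  intros j Hj; apply in_seq in Hj; destruct j as [|j]; [lia|].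
  destruct (partial_jet_order_zero f j p Hf) as [-> ->]; ring.
Qed.

Lemma DyB_order_zero k N f p : order_zero f ->
  DyB k N f p = Dorder0 Cy Fu Fv Yk k f p.
Proof.
  intro Hf; unfold DyB, Dorder0; simpl seq; rewrite rsum_cons.
  rewrite (rsum_zero (seq 1 N)); [unfold cu, cv; simpl; ring|].
  intros j Hj; apply in_seq in Hj; destruct j as [|j]; [lia|].
  destruct (partial_jet_order_zero f j p Hf) as [-> ->]; ring.
Qed.

Section Derivation.
Variables (a0 : coord) (cu cv : point -> R) (h : nat -> point -> R) (K : nat).
Let D := Dorder0 a0 cu cv h K.

Lemma Dorder0_const a p : D (fun _ => a) p = 0.
Proof.
  unfold D, Dorder0; rewrite !partial_const, rsum_zero; [ring|].
  intros; rewrite partial_const; ring.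
Qed.

Lemma Dorder0_plus f g p : partially_derivable f -> partially_derivable g ->
  D (fun q => f q + g q) p = D f p + D g p.
Proof.
  intros Hf Hg; unfold D, Dorder0; rewrite !partial_plus by auto.
  rewrite (rsum_ext _ _ (fun i => h i p * partial (Cpsi i) f p + h i p * partial (Cpsi i) g p)),
    rsum_plus by (intros; rewrite partial_plus by auto; ring).
  ring.
Qed.

Lemma Dorder0_minus f g p : partially_derivable f -> partially_derivable g ->
  D (fun q => f q - g q) p = D f p - D g p.
Proof.
  intros Hf Hg; unfold D, Dorder0; rewrite !partial_minus by auto.
  rewrite (rsum_ext _ _ (fun i => h i p * partial (Cpsi i) f p
                                 + -1 * (h i p * partial (Cpsi i) g p))),
    rsum_plus, rsum_scal by (intros; rewrite partial_minus by auto; ring).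
  ring.
Qed.

Lemma Dorder0_mult f g p : partially_derivable f -> partially_derivable g ->
  D (fun q => f q * g q) p = D f p * g p + f p * D g p.
Proof.
  intros Hf Hg; unfold D, Dorder0; rewrite !partial_mult by auto.
  rewrite (rsum_ext _ _ (fun i => g p * (h i p * partial (Cpsi i) f p)
                                 + f p * (h i p * partial (Cpsi i) g p))),
    rsum_plus, !rsum_scal by (intros; rewrite partial_mult by auto; ring).
  ring.
Qed.

Lemma Dorder0_opp f p : D (fun q => - f q) p = - D f p.
Proof.
  unfold D, Dorder0; rewrite !partial_opp.
  rewrite (rsum_ext _ _ (fun i => -1 * (h i p * partial (Cpsi i) f p))), rsum_scal
    by (intros; rewrite partial_opp; ring).
  ring.
Qed.

Lemma Dorder0_coord c p : D (fun q => q c) p =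
  (if coord_eq_dec a0 c then 1 else 0) + (if coord_eq_dec (Cu 0) c then cu p else 0)
  + (if coord_eq_dec (Cv 0) c then cv p else 0)
  + rsum (seq 3 (K - 3)) (fun i => if coord_eq_dec (Cpsi i) c then h i p else 0).
Proof.
  unfold D, Dorder0; rewrite !partial_coord.
  rewrite (rsum_ext _ _ (fun i => if coord_eq_dec (Cpsi i) c then h i p else 0)).
  - destruct (coord_eq_dec (Cu 0) c), (coord_eq_dec (Cv 0) c); ring.
  - intros i _; rewrite partial_coord; destruct (coord_eq_dec (Cpsi i) c); ring.
Qed.

Lemma Dorder0_ext f g p : (forall q, f q = g q) -> D f p = D g p.
Proof.
  intro H; replace f with g by (symmetry; apply functional_extensionality; auto).
  reflexivity.
Qed.

Lemma Dorder0_uu p : a0 <> Cu 0 -> D uu p = cu p.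
Proof.
  intro Ha; unfold uu; rewrite Dorder0_coord, rsum_zero.
  - destruct (coord_eq_dec a0 (Cu 0)); [contradiction|].
    destruct (coord_eq_dec (Cu 0) (Cu 0)); [|contradiction].
    destruct (coord_eq_dec (Cv 0) (Cu 0)); [discriminate|ring].
  - intros i _; destruct (coord_eq_dec (Cpsi i) (Cu 0)); [discriminate|reflexivity].
Qed.

Lemma Dorder0_vv p : a0 <> Cv 0 -> D vv p = cv p.
Proof.
  intro Ha; unfold vv; rewrite Dorder0_coord, rsum_zero.
  - destruct (coord_eq_dec a0 (Cv 0)); [contradiction|].
    destruct (coord_eq_dec (Cv 0) (Cv 0)); [|contradiction].
    destruct (coord_eq_dec (Cu 0) (Cv 0)); [discriminate|ring].
  - intros i _; destruct (coord_eq_dec (Cpsi i) (Cv 0)); [discriminate|reflexivity].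
Qed.

Lemma Dorder0_coord_outside c p :
  c <> Cu 0 -> c <> Cv 0 -> (forall i, (3 <= i < K)%nat -> c <> Cpsi i) ->
  D (fun q => q c) p = if coord_eq_dec a0 c then 1 else 0.
Proof.
  intros Hu Hv Hpsi; rewrite Dorder0_coord, rsum_zero.
  - destruct (coord_eq_dec (Cu 0) c), (coord_eq_dec (Cv 0) c); try congruence; ring.
  - intros i Hi; apply in_seq in Hi.
    destruct (coord_eq_dec (Cpsi i) c) as [<-|]; [exfalso; apply (Hpsi i); auto; lia|reflexivity].
Qed.

Lemma Dorder0_psi_coord m p : a0 <> Cpsi m -> (3 <= m < K)%nat ->
  D (fun q => q (Cpsi m)) p = h m p.
Proof.
  intros Ha Hm; rewrite Dorder0_coord, (rsum_single _ _ m) by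
    (lia || (intros i Hi; destruct (coord_eq_dec (Cpsi i) (Cpsi m)); congruence)).
  destruct (coord_eq_dec a0 (Cpsi m)), (coord_eq_dec (Cpsi m) (Cpsi m)); try congruence.
  destruct (coord_eq_dec (Cu 0) (Cpsi m)), (coord_eq_dec (Cv 0) (Cpsi m)); try discriminate; ring.
Qed.

Lemma Dorder0_Xext_le2 j p : (j <= 2)%nat -> D (Xext j) p = 0.
Proof.
  intro Hj; destruct j as [|[|[|j]]]; try lia;
    [ rewrite (Dorder0_ext _ (fun _ => 0)) by (intro; apply Xext_0)
    | rewrite (Dorder0_ext _ (fun _ => 0)) by (intro; apply Xext_1)
    | rewrite (Dorder0_ext _ (fun _ => 1)) by (intro; apply Xext_2) ];
    apply Dorder0_const.
Qed.

Hypotheses (Ha0u : a0 <> Cu 0) (Ha0v : a0 <> Cv 0).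

Lemma Dorder0_Xext_rec j p : D (Xext (S (S (S j)))) p =
  (cu p + cv p) * Xext (S (S j)) p + (uu p + vv p) * D (Xext (S (S j))) p
  - (cu p * vv p + uu p * cv p) * Xext (S j) p - uu p * vv p * D (Xext (S j)) p
  - INR j * D (psi j) p.
Proof.
  rewrite (Dorder0_ext _ (fun q => (uu q + vv q) * Xext (S (S j)) q
      - uu q * vv q * Xext (S j) q - INR j * psi j q)) by (intro; apply Xext_rec).
  rewrite !Dorder0_minus, !Dorder0_mult, Dorder0_plus, Dorder0_const,
    Dorder0_uu, Dorder0_vv by (auto; partially_derivable_tac).
  ring.
Qed.

Lemma Dorder0_Yext j p : D (Yext j) p =
  - ((cu p * vv p + uu p * cv p) * Xext (j - 1) p + uu p * vv p * D (Xext (j - 1)) p)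
  - INR (j - 2) * D (psi (j - 2)) p.
Proof.
  unfold Yext.
  rewrite Dorder0_minus, Dorder0_opp, !Dorder0_mult, Dorder0_const,
    Dorder0_uu, Dorder0_vv by (auto; partially_derivable_tac).
  ring.
Qed.

End Derivation.

(** * The conservation law *)

Lemma psi_0 : psi 0 = fun q => q (Cpsi 0).
Proof. reflexivity. Qed.

Lemma psi_1 : psi 1 = fun q => q Cy.
Proof. reflexivity. Qed.

Lemma psi_2 : psi 2 = fun q => q Cx.
Proof. reflexivity. Qed.

Lemma psi_ge3 m : psi (S (S (S m))) = fun q => q (Cpsi (S (S (S m)))).
Proof. reflexivity. Qed.

Lemma Cpsi0_not_Cpsi_ge3 i : (3 <= i)%nat -> Cpsi 0 <> Cpsi i.
Proof. intros Hi E; injection E; lia. Qed.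

Section Conservation.
Variable K : nat.
Let DX := Dorder0 Cx (fun q => q (Cu 1)) (fun q => q (Cv 1)) Xk K.
Let DY := Dorder0 Cy Fu Fv Yk K.

Lemma DX_psi m p : (m < K)%nat -> DX (psi m) p = Xext m p.
Proof.
  intro Hm; unfold DX; destruct m as [|[|[|m]]].
  - rewrite psi_0, Dorder0_coord_outside, Xext_0;
      [reflexivity | discriminate | discriminate | intros i Hi; apply Cpsi0_not_Cpsi_ge3; lia].
  - rewrite psi_1, Dorder0_coord_outside, Xext_1 by discriminate; reflexivity.
  - rewrite psi_2, Dorder0_coord_outside, Xext_2 by discriminate; reflexivity.
  - rewrite psi_ge3, Xext_eq by lia; apply Dorder0_psi_coord; [discriminate | lia].
Qed.

Lemma DY_psi m p : (m < K)%nat -> DY (psi m) p = Xext (S m) p - (uu p + vv p) * Xext m p.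
Proof.
  intro Hm; unfold DY; destruct m as [|[|[|m]]].
  - rewrite psi_0, Dorder0_coord_outside, Xext_0, Xext_1;
      [simpl; ring | discriminate | discriminate | intros i Hi; apply Cpsi0_not_Cpsi_ge3; lia].
  - rewrite psi_1, Dorder0_coord_outside, Xext_1, Xext_2 by discriminate; simpl; ring.
  - rewrite psi_2, Dorder0_coord_outside, (Xext_rec 0), Xext_2, Xext_1, INR_0 by discriminate.
    simpl; ring.
  - rewrite psi_ge3, Dorder0_psi_coord, Xext_rec, <- (Yext_eq (S (S (S m))))
      by (discriminate || lia).
    unfold Yext; simpl Nat.sub; ring.
Qed.

Lemma DY_Xext_eq_DX_Yext j p : (j <= K)%nat -> Dom p -> DY (Xext j) p = DX (Yext j) p.
Proof.
  intros HjK Hp; change (uu p <> vv p) in Hp; revert HjK.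
  induction j as [j IH] using lt_wf_ind; intro HjK.
  destruct j as [|[|[|[|j]]]].
  1-3: unfold DX, DY; rewrite Dorder0_Yext, !Dorder0_Xext_le2 by (discriminate || lia);
       simpl Nat.sub; rewrite ?Xext_0, ?Xext_1, INR_0; ring.
  - assert (Hx1 := DX_psi 1 p ltac:(lia)).
    unfold DX, DY in *.
    rewrite (Dorder0_Xext_rec Cy), Dorder0_Yext, !Dorder0_Xext_le2 by (discriminate || lia).
    simpl Nat.sub; rewrite Hx1, Xext_1, Xext_2, INR_0, INR_1.
    unfold Fu, Fv; field; split; intro; apply Hp; lra.
  - assert (IH3 := IH (S (S (S j))) ltac:(lia) ltac:(lia)).
    assert (IH2 := IH (S (S j)) ltac:(lia) ltac:(lia)).
    assert (Hx0 := DX_psi j p ltac:(lia)).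
    assert (Hx1 := DX_psi (S j) p ltac:(lia)).
    assert (Hx2 := DX_psi (S (S j)) p ltac:(lia)).
    assert (Hy1 := DY_psi (S j) p ltac:(lia)).
    unfold DX, DY in *.
    rewrite Dorder0_Yext in IH3, IH2 by discriminate.
    rewrite (Dorder0_Xext_rec Cy), Dorder0_Yext by discriminate.
    simpl Nat.sub in *; rewrite Nat.sub_0_r in IH2.
    rewrite (Dorder0_Xext_rec Cx) by discriminate.
    rewrite IH3, IH2, Hx0, Hx1, Hx2, Hy1.
    unfold Fu, Fv; rewrite !S_INR; field; split; intro; apply Hp; lra.
Qed.

End Conservation.

Lemma conservation_law k N p : (3 <= k)%nat -> Dom p ->
  DyB k N (Xk k) p = DxB k N (Yk k) p.
Proof.
  intros Hk Hp.
  rewrite DyB_order_zero, DxB_order_zero by (apply Xk_order_zero || apply Yk_order_zero).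
  rewrite (Dorder0_ext _ _ _ _ _ (Xk k) (Xext k)) by (intro; symmetry; apply Xext_eq; lia).
  rewrite (Dorder0_ext _ _ _ _ _ (Yk k) (Yext k)) by (intro; symmetry; apply Yext_eq; lia).
  apply DY_Xext_eq_DX_Yext; auto.
Qed.

(** * Nontriviality *)

Lemma eq0_of_abs_le_mul a B : (forall u, 0 < u <= 1 -> Rabs a <= u * B) -> a = 0.
Proof.
  intro H; destruct (Req_dec a 0) as [|Ha]; [assumption|exfalso].
  assert (Hpos : 0 < Rabs a) by (apply Rabs_pos_lt; auto).
  assert (HB : Rabs a <= B) by (specialize (H 1); lra).
  assert (Hu : 0 < Rabs a / (2 * B) <= 1).
  { split; [apply Rdiv_lt_0_compat; lra|].
    apply Rmult_le_reg_r with (2 * B); [lra|]. field_simplify; lra. }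
  specialize (H _ Hu); replace (Rabs a / (2 * B) * B) with (Rabs a / 2) in H by (field; lra).
  lra.
Qed.

Lemma rsum_pow_abs_le a l u : 0 < u <= 1 ->
  Rabs (rsum l (fun m => a m * u ^ m)) <= rsum l (fun m => Rabs (a m)).
Proof.
  intro Hu; apply rsum_abs_le; intros m _.
  assert (H0 : 0 <= u ^ m) by (apply pow_le; lra).
  assert (H1 : u ^ m <= 1) by (rewrite <- (pow1 m); apply pow_incr; lra).
  rewrite Rabs_mult, (Rabs_right (u ^ m)) by lra.
  pose proof (Rabs_pos (a m)); nra.
Qed.

Lemma pow_ne_lower_degree_poly d a :
  ~ (forall u, 0 < u -> u ^ d = rsum (seq 0 d) (fun m => a m * u ^ m)).
Proof.
  revert a; induction d as [|d IH]; intros a H.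
  - specialize (H 1 Rlt_0_1); change (rsum (seq 0 0) _) with 0 in H; simpl in H; lra.
  - set (tail u := u ^ d - rsum (seq 0 d) (fun m => a (S m) * u ^ m)).
    assert (Hsplit : forall u, 0 < u -> a 0%nat = u * tail u).
    { intros u Hu; unfold tail; rewrite Rmult_minus_distr_l, <- rsum_scal.
      rewrite (rsum_ext _ _ (fun m => a (S m) * u ^ S m)) by (intros; simpl; ring).
      rewrite <- (rsum_map _ S (fun m => a m * u ^ m)), seq_shift.
      specialize (H u Hu); simpl seq in H; rewrite rsum_cons in H; simpl in H |- *; lra. }
    assert (Ha0 : a 0%nat = 0).
    { apply (eq0_of_abs_le_mul _ (1 + rsum (seq 0 d) (fun m => Rabs (a (S m))))).
      intros u Hu; rewrite (Hsplit u) by lra; rewrite Rabs_mult, (Rabs_right u) by lra.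
      apply Rmult_le_compat_l; [lra|]; unfold tail.
      eapply Rle_trans; [apply Rabs_triang|]; rewrite Rabs_Ropp.
      apply Rplus_le_compat; [|apply rsum_pow_abs_le; exact Hu].
      rewrite Rabs_right by (apply Rle_ge, pow_le; lra).
      rewrite <- (pow1 d); apply pow_incr; lra. }
    apply (IH (fun m => a (S m))); intros u Hu.
    specialize (Hsplit u Hu); rewrite Ha0 in Hsplit; unfold tail in Hsplit.
    apply Rminus_diag_uniq; apply Rmult_eq_reg_l with u; lra.
Qed.

Definition on_u_axis (u : R) : point := upd (fun _ => 0) (Cu 0) u.

Lemma Dom_on_u_axis u : u <> 0 -> Dom (on_u_axis u).
Proof.
  intro Hu; unfold Dom, on_u_axis; rewrite upd_same, upd_other by discriminate; exact Hu.
Qed.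

Lemma on_u_axis_other u c : c <> Cu 0 -> on_u_axis u c = 0.
Proof. intro Hc; apply upd_other, Hc. Qed.

Lemma Xk_on_u_axis i u : Xk i (on_u_axis u) = u ^ (i - 2).
Proof.
  assert (Hsigma : forall m, sigma m (on_u_axis u) = u ^ m).
  { induction m as [|m IH]; [apply sigma_0|].
    rewrite sigma_S, IH; unfold uu, vv; rewrite on_u_axis_other by discriminate.
    unfold on_u_axis; rewrite upd_same; simpl; ring. }
  unfold Xk; rewrite Hsigma, rsum_zero; [ring|].
  intros j _; unfold psi.
  destruct (Nat.eqb j 1), (Nat.eqb j 2); rewrite on_u_axis_other by discriminate; ring.
Qed.

Section Nontriviality.
Variables (k N : nat) (g : point -> R).
Hypotheses (Hdep : depends_on k N g) (Hsmooth : smooth_on g)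
  (HX : forall p, Dom p -> Xk k p = DxB k N g p).

Definition invariant_along (c : coord) : Prop :=
  forall q, Dom q -> forall t, g (upd q c t) = g q.

Lemma invariant_along_high_jets j :
  (N < j)%nat -> invariant_along (Cu j) /\ invariant_along (Cv j).
Proof.
  intro Hj; split; intros q _ t; apply Hdep; intros c Hc; unfold upd;
    destruct (coord_eq_dec c _) as [->|]; try reflexivity; simpl in Hc; lia.
Qed.

Lemma partial_upd_invariant c' c p t :
  c' <> Cu 0 -> c' <> Cv 0 -> invariant_along c' -> Dom p ->
  partial c g (upd p c' t) = partial c g p.
Proof.
  intros Hu Hv Hinv Hp; unfold partial.
  destruct (coord_eq_dec c c') as [->|Hc].
  - rewrite upd_same.
    rewrite (Derive_ext (fun s => g (upd (upd p c' t) c' s)) (fun _ => g p)),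
      (Derive_ext (fun s => g (upd p c' s)) (fun _ => g p)), !Derive_const;
      [reflexivity | intro s; apply Hinv, Hp | intro s; rewrite upd_upd; apply Hinv, Hp].
  - rewrite upd_other by auto.
    destruct (Dom_upd_punctured c p Hp) as [a [Ha Hdom]].
    apply (Derive_ext_punctured _ _ _ a Ha); intros s Hs.
    rewrite upd_comm by auto; apply Hinv, Hdom, Hs.
Qed.

(* [DxB g] is affine in the jet coordinate [c = u_(M+1)] or [v_(M+1)], with slope
   [partial g] along [u_M] resp. [v_M]; as [Xk k] does not see [c], the slope vanishes. *)
Lemma DxB_slope_eq0 c p :
  (exists M, c = Cu (S M) \/ c = Cv (S M)) -> invariant_along c -> Dom p ->
  rsum (seq 0 (S N)) (fun j => (if coord_eq_dec (Cu (S j)) c then partial (Cu j) g p else 0)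
                             + (if coord_eq_dec (Cv (S j)) c then partial (Cv j) g p else 0)) = 0.
Proof.
  intros [M HM] Hinv Hp.
  assert (Hu : c <> Cu 0) by (destruct HM as [-> | ->]; discriminate).
  assert (Hv : c <> Cv 0) by (destruct HM as [-> | ->]; discriminate).
  assert (HXk : forall i q t, Xk i (upd q c t) = Xk i q)
    by (intros; destruct HM as [-> | ->]; apply (order_zero_upd_jet _ M q t), Xk_order_zero).
  set (p1 := upd p c (p c + 1)).
  assert (Hshift : DxB k N g p1 = DxB k N g p
    + rsum (seq 0 (S N)) (fun j => (if coord_eq_dec (Cu (S j)) c then partial (Cu j) g p else 0)
                                 + (if coord_eq_dec (Cv (S j)) c then partial (Cv j) g p else 0))).
  { unfold DxB, p1; rewrite partial_upd_invariant by auto.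
    rewrite (rsum_ext (seq 3 _) _ (fun i => Xk i p * partial (Cpsi i) g p))
      by (intros; rewrite HXk, partial_upd_invariant; auto).
    rewrite (rsum_ext (seq 0 _) _ (fun j =>
        (p (Cu (S j)) * partial (Cu j) g p + p (Cv (S j)) * partial (Cv j) g p)
        + ((if coord_eq_dec (Cu (S j)) c then partial (Cu j) g p else 0)
           + (if coord_eq_dec (Cv (S j)) c then partial (Cv j) g p else 0)))).
    - rewrite rsum_plus; ring.
    - intros j _; rewrite !partial_upd_invariant, !upd_shift by auto.
      destruct (coord_eq_dec (Cu (S j)) c), (coord_eq_dec (Cv (S j)) c); ring. }
  assert (Hp1 : Dom p1) by (apply Dom_upd; auto).
  pose proof (HX p Hp); pose proof (HX p1 Hp1); unfold p1 in *; rewrite HXk in *; lra.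
Qed.

Lemma partial_jet_eq0 M p : (M <= N)%nat -> Dom p ->
  invariant_along (Cu (S M)) -> invariant_along (Cv (S M)) ->
  partial (Cu M) g p = 0 /\ partial (Cv M) g p = 0.
Proof.
  intros HM Hp Hu Hv; split.
  - rewrite <- (DxB_slope_eq0 (Cu (S M)) p) by eauto.
    rewrite (rsum_single _ _ M); [| lia |].
    + destruct (coord_eq_dec (Cu (S M)) (Cu (S M))), (coord_eq_dec (Cv (S M)) (Cu (S M)));
        congruence || ring.
    + intros j Hj; destruct (coord_eq_dec (Cu (S j)) (Cu (S M))) as [E|];
        [injection E; lia|]; destruct (coord_eq_dec (Cv (S j)) (Cu (S M))); [discriminate|ring].
  - rewrite <- (DxB_slope_eq0 (Cv (S M)) p) by eauto.
    rewrite (rsum_single _ _ M); [| lia |].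
    + destruct (coord_eq_dec (Cv (S M)) (Cv (S M))), (coord_eq_dec (Cu (S M)) (Cv (S M)));
        congruence || ring.
    + intros j Hj; destruct (coord_eq_dec (Cv (S j)) (Cv (S M))) as [E|];
        [injection E; lia|]; destruct (coord_eq_dec (Cu (S j)) (Cv (S M))); [discriminate|ring].
Qed.

Lemma Derive_along_coord q c s : Dom (upd q c s) ->
  ex_derive (fun t => g (upd q c t)) s /\
  Derive (fun t => g (upd q c t)) s = partial c g (upd q c s).
Proof.
  intro Hd; destruct (Hsmooth nil (upd q c s) Hd) as [Hex _].
  specialize (Hex c); simpl iterpartial in Hex; rewrite upd_same in Hex.
  unfold partial; rewrite upd_same; split.
  - eapply ex_derive_ext; [|exact Hex]; intro; simpl; rewrite upd_upd; reflexivity.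
  - apply Derive_ext; intro; rewrite upd_upd; reflexivity.
Qed.

Lemma invariant_along_of_partial_eq0 c : c <> Cu 0 -> c <> Cv 0 ->
  (forall p, Dom p -> partial c g p = 0) -> invariant_along c.
Proof.
  intros Hu Hv H q Hq t; rewrite <- (upd_id q c) at 2; symmetry.
  apply (eq_of_Derive_eq0 (fun s => g (upd q c s))); intros s _.
  assert (Hd : Dom (upd q c s)) by (apply Dom_upd; auto).
  destruct (Derive_along_coord q c s Hd) as [Hex ->]; auto.
Qed.

Lemma invariant_along_jets M : (1 <= M)%nat -> invariant_along (Cu M) /\ invariant_along (Cv M).
Proof.
  intro HM; remember (S N - M)%nat as d eqn:Hd; revert M HM Hd.
  induction d as [|d IH]; intros M HM Hd.
  - apply invariant_along_high_jets; lia.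
  - destruct (IH (S M) ltac:(lia) ltac:(lia)) as [Hu Hv].
    split; apply invariant_along_of_partial_eq0; try (intros [=]; lia);
      intros p Hp; apply (partial_jet_eq0 M p); auto; lia.
Qed.

Lemma partial_u0_eq0 p : Dom p -> partial (Cu 0) g p = 0.
Proof.
  intro Hp; destruct (invariant_along_jets 1 (le_n 1)) as [Hu Hv].
  apply (partial_jet_eq0 0 p); auto; lia.
Qed.

Lemma g_upd_u0_pos q u : q (Cv 0) = 0 -> 0 < q (Cu 0) -> 0 < u -> g (upd q (Cu 0) u) = g q.
Proof.
  intros Hv Hq Hu; rewrite <- (upd_id q (Cu 0)) at 2; symmetry.
  apply (eq_of_Derive_eq0 (fun s => g (upd q (Cu 0) s))); intros s Hs.
  assert (Hs0 : 0 < s) by (pose proof (Rmin_glb_lt _ _ _ Hq Hu); lra).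
  assert (Hd : Dom (upd q (Cu 0) s))
    by (unfold Dom; rewrite upd_same, upd_other by discriminate; lra).
  destruct (Derive_along_coord q (Cu 0) s Hd) as [Hex ->]; split; auto; apply partial_u0_eq0, Hd.
Qed.

Lemma partial_on_u_axis c u : c <> Cu 0 -> c <> Cv 0 -> 0 < u ->
  partial c g (on_u_axis u) = partial c g (on_u_axis 1).
Proof.
  intros Hc Hcv Hu; unfold partial, on_u_axis; rewrite !upd_other by auto.
  apply Derive_ext; intro t.
  rewrite !(upd_comm (fun _ => 0) (Cu 0) c) by auto.
  rewrite <- (upd_upd (upd (fun _ => 0) c t) (Cu 0) 1 u).
  apply g_upd_u0_pos; auto.
  - rewrite !upd_other by (discriminate || auto); reflexivity.
  - rewrite upd_same; lra.
Qed.

Lemma DxB_on_u_axis u : 0 < u -> DxB k N g (on_u_axis u) = partial Cx g (on_u_axis 1)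
  + rsum (seq 3 (k - 3)) (fun i => u ^ (i - 2) * partial (Cpsi i) g (on_u_axis 1)).
Proof.
  intro Hu; unfold DxB.
  rewrite (rsum_zero (seq 0 _))
    by (intros; rewrite !on_u_axis_other by discriminate; ring).
  rewrite partial_on_u_axis by (discriminate || lra).
  rewrite (rsum_ext (seq 3 _) _ (fun i => u ^ (i - 2) * partial (Cpsi i) g (on_u_axis 1)))
    by (intros; rewrite Xk_on_u_axis, partial_on_u_axis by (discriminate || lra); reflexivity).
  ring.
Qed.

Lemma Xk_not_DxB : (3 <= k)%nat -> False.
Proof.
  intro Hk.
  set (a m := match m with
              | O => partial Cx g (on_u_axis 1)
              | S _ => partial (Cpsi (S (S m))) g (on_u_axis 1) end).
  apply (pow_ne_lower_degree_poly (k - 2) a); intros u Hu.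
  rewrite <- Xk_on_u_axis, HX, DxB_on_u_axis
    by (exact Hu || apply Dom_on_u_axis, Rgt_not_eq, Hu).
  replace (k - 2)%nat with (S (k - 3)) by lia; simpl seq; rewrite rsum_cons.
  rewrite <- (seq_shift _ 2), <- (seq_shift _ 1), !rsum_map.
  f_equal; [simpl; ring|].
  apply rsum_ext; intros [|m] Hm; [apply in_seq in Hm; lia|].
  simpl Nat.sub; unfold a; ring.
Qed.

End Nontriviality.

Theorem mainTheorem7 (k : nat) (hk : (3 <= k)%nat) :
  (forall (N : nat) (p : point), Dom p ->
     DyB k N (Xk k) p = DxB k N (Yk k) p) /\
  ~ (exists (N : nat) (g : point -> R),
       depends_on k N g /\ smooth_on g /\
       forall p : point, Dom p ->
         Xk k p = DxB k N g p /\ Yk k p = DyB k N g p).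
Proof.
  split.
  - intros N p Hp; apply conservation_law; assumption.
  - intros [N [g [Hdep [Hsmooth Hpot]]]].
    apply (Xk_not_DxB k N g Hdep Hsmooth); [intros p Hp; apply Hpot, Hp | exact hk].
Qed.
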